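(* Let $J$ be a countable set and $\mathcal{A}$ the (non-unital) algebra of functions $f:J\to\mathbb{R}$ with $f(i)=0$ for all but finitely many $i\in J$, with pointwise operations; for $i\in J$ let $e_i$ be the characteristic function of $\{i\}$. Let $\sigma:J\to J$ be a bijection and $\tilde{\sigma}:\mathcal{A}\to\mathcal{A}$, $\tilde{\sigma}(f)=f\circ\sigma^{-1}$. An $\mathbb{R}$-linear map $\Delta:\mathcal{A}\to\mathcal{A}$ is a $\tilde{\sigma}$-derivation if and only if for every $i\in J$: (1) $\Delta(e_i)(\sigma(i))=-\Delta(e_{\sigma(i)})(\sigma(i))$, and (2) $\Delta(e_i)(k)=0$ for all $k\notin\{i,\sigma(i)\}$.
   Context: A $\tilde{\sigma}$-derivation is an $\mathbb{R}$-linear map $\Delta:\mathcal{A}\to\mathcal{A}$ with $\Delta(fg)=\tilde{\sigma}(f)\Delta(g)+\Delta(f)g$ for all $f,g\in\mathcal{A}$. *)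

From HB Require Import structures.
From mathcomp Require Import all_boot all_order all_algebra.
From mathcomp Require Import reals.
Set Implicit Arguments. Unset Strict Implicit. Unset Printing Implicit Defensive.
Import Order.TTheory GRing.Theory Num.Theory.
Local Open Scope ring_scope.

Record fsf (R : realType) (J : countType) := FSF {
  fsf_fun :> J -> R;
  fsf_fin : exists s : seq J, forall i, i \notin s -> fsf_fun i = 0 }.

Record bij (J : Type) := Bij {
  bij_fun :> J -> J;
  bij_inv : J -> J;
  bij_K : cancel bij_fun bij_inv;
  bij_invK : cancel bij_inv bij_fun }.

Section Ops.
Variables (R : realType) (J : countType).

Lemma fsf_add_fin (f g : fsf R J) :
  exists s : seq J, forall i, i \notin s -> f i + g i = 0.
Proof.
case: (fsf_fin f) => s1 H1; case: (fsf_fin g) => s2 H2.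
exists (s1 ++ s2) => i; rewrite mem_cat negb_or => /andP [a b].
by rewrite H1 // H2 // addr0.
Qed.
Definition fsf_add (f g : fsf R J) : fsf R J := FSF (fsf_add_fin f g).

Lemma fsf_mul_fin (f g : fsf R J) :
  exists s : seq J, forall i, i \notin s -> f i * g i = 0.
Proof.
case: (fsf_fin f) => s1 H1; exists s1 => i Hi; by rewrite H1 // mul0r.
Qed.
Definition fsf_mul (f g : fsf R J) : fsf R J := FSF (fsf_mul_fin f g).

Lemma fsf_scale_fin (a : R) (f : fsf R J) :
  exists s : seq J, forall i, i \notin s -> a * f i = 0.
Proof.
case: (fsf_fin f) => s1 H1; exists s1 => i Hi; by rewrite H1 // mulr0.
Qed.
Definition fsf_scale (a : R) (f : fsf R J) : fsf R J := FSF (fsf_scale_fin a f).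

Lemma fsf_e_fin (i : J) :
  exists s : seq J, forall j, j \notin s -> (if j == i then 1 else 0 : R) = 0.
Proof.
exists [:: i] => j; rewrite inE; by case: (j == i).
Qed.
Definition fsf_e (i : J) : fsf R J := FSF (fsf_e_fin i).

Lemma fsf_tilde_fin (sigma : bij J) (f : fsf R J) :
  exists s : seq J, forall j, j \notin s -> f (bij_inv sigma j) = 0.
Proof.
case: (fsf_fin f) => s1 H1; exists (map sigma s1) => j Hj; apply: H1.
apply: contra Hj => Hin; rewrite -[j](bij_invK sigma); exact: map_f.
Qed.
Definition fsf_tilde (sigma : bij J) (f : fsf R J) : fsf R J :=
  FSF (fsf_tilde_fin sigma f).

Definition fsf_linear (Delta : fsf R J -> fsf R J) : Prop :=
  (forall f g, Delta (fsf_add f g) = fsf_add (Delta f) (Delta g)) /\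
  (forall (a : R) f, Delta (fsf_scale a f) = fsf_scale a (Delta f)).

Definition sigma_derivation (sigma : bij J) (Delta : fsf R J -> fsf R J) : Prop :=
  forall f g, Delta (fsf_mul f g) =
    fsf_add (fsf_mul (fsf_tilde sigma f) (Delta g)) (fsf_mul (Delta f) g).

End Ops.

From HB Require Import structures.
From mathcomp Require Import all_boot all_order all_algebra.
From mathcomp Require Import reals.
From Stdlib Require Import FunctionalExtensionality ProofIrrelevance.
From mathcomp Require Import ring.
Import Order.TTheory GRing.Theory Num.Theory.
Set Implicit Arguments. Unset Strict Implicit.
Local Open Scope ring_scope.

(* Conditions (1) and (2) say exactly that
   Delta(f)(k) = a_k (f(k) - f(sigma^-1 k)) with a_k = Delta(e_k)(k), and by
   a ring identity every map of this shape is a sigma~-derivation.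
   Conversely, for a sigma~-derivation, evaluating Delta(e_i e_i) = Delta(e_i)
   gives (2) and kills Delta(e_i)(i) when sigma fixes i, while
   e_i e_(sigma i) = 0 for sigma i <> i gives (1). *)

Lemma bij_invE (J : eqType) (sigma : bij J) (i j : J) :
  (bij_inv sigma j == i) = (j == sigma i).
Proof. by apply/eqP/eqP => [<-|->]; rewrite ?bij_invK ?bij_K. Qed.

Section FinitelySupported.
Variables (R : realType) (J : countType).

Lemma fsf_ext (f g : fsf R J) : (forall i, f i = g i) -> f = g.
Proof.
case: f g => f f_fin [g g_fin] /= fg.
have eq_fg : f = g by apply: functional_extensionality.
by subst g; congr FSF; apply: proof_irrelevance.
Qed.

Lemma fsf_ind (P : fsf R J -> Prop) :
  (forall f : fsf R J, (forall i, f i = 0) -> P f) ->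
  (forall (c : R) (x : J) (f : fsf R J),
     P f -> P (fsf_add (fsf_scale c (fsf_e R x)) f)) ->
  forall f, P f.
Proof.
move=> P0 PS f; case: (fsf_fin f) => s; elim: s f => [|x s IH] f f_s.
  by apply: P0 => i; apply: f_s.
have f'_fin : exists s' : seq J, forall i, i \notin s' ->
    (if i == x then 0 else f i) = 0.
  exists s => i i_s; case: eqP => // /eqP ix.
  by apply: f_s; rewrite inE negb_or ix.
have -> : f = fsf_add (fsf_scale (f x) (fsf_e R x)) (FSF f'_fin).
  apply: fsf_ext => i /=.
  by case: (eqVneq i x) => [->|_]; rewrite ?mulr1 ?addr0 ?mulr0 ?add0r.
apply/PS/IH => i i_s /=; case: eqP => // /eqP ix.
by apply: f_s; rewrite inE negb_or ix.
Qed.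

Lemma fsf_linear0 (Delta : fsf R J -> fsf R J) (f : fsf R J) :
  fsf_linear Delta -> (forall i, f i = 0) -> forall k, Delta f k = 0.
Proof.
move=> [_ DeltaZ] f0 k.
have -> : f = fsf_scale 0 f by apply: fsf_ext => i /=; rewrite f0 mulr0.
by rewrite DeltaZ /= mul0r.
Qed.

Lemma fsf_tilde_e (sigma : bij J) (i j : J) :
  fsf_tilde sigma (fsf_e R i) j = fsf_e R (sigma i) j.
Proof. by rewrite /= bij_invE. Qed.

End FinitelySupported.

Section DerivationOnIdempotents.
Variables (R : realType) (J : countType) (sigma : bij J) (Delta : fsf R J -> fsf R J).
Hypotheses (Delta_lin : fsf_linear Delta)
           (Delta_der : sigma_derivation sigma Delta).

Lemma derivation_e_idem (i k : J) :
  Delta (fsf_e R i) k =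
    fsf_e R (sigma i) k * Delta (fsf_e R i) k + Delta (fsf_e R i) k * fsf_e R i k.
Proof.
have e_idem : fsf_mul (fsf_e R i) (fsf_e R i) = fsf_e R i.
  by apply: fsf_ext => j /=; case: eqP; rewrite ?mulr1 ?mulr0.
by rewrite -{1}e_idem Delta_der /= bij_invE.
Qed.

Lemma derivation_e_out (i k : J) :
  k != i -> k != sigma i -> Delta (fsf_e R i) k = 0.
Proof.
by move=> /negbTE ki /negbTE ksi; rewrite derivation_e_idem /= ki ksi mul0r mulr0 addr0.
Qed.

Lemma derivation_e_fixed (i : J) : sigma i = i -> Delta (fsf_e R i) i = 0.
Proof.
move=> sii; have := derivation_e_idem i i; rewrite /= sii eqxx mul1r mulr1.
by move=> E; apply: (addrI (Delta (fsf_e R i) i)); rewrite addr0 -E.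
Qed.

Lemma derivation_e_swap (i : J) : sigma i != i ->
  Delta (fsf_e R i) (sigma i) = - Delta (fsf_e R (sigma i)) (sigma i).
Proof.
move=> sii.
have e_orth k : fsf_mul (fsf_e R i) (fsf_e R (sigma i)) k = 0.
  rewrite /=; case: (eqVneq k i) => [->|_]; last by rewrite mul0r.
  by rewrite eq_sym (negbTE sii) mulr0.
have := fsf_linear0 Delta_lin e_orth (sigma i).
rewrite Delta_der /= bij_invE !eqxx mul1r mulr1 => /eqP.
by rewrite addrC addr_eq0 => /eqP.
Qed.

End DerivationOnIdempotents.

Section ShiftDifference.
Variables (R : realType) (J : countType) (sigma : bij J) (Delta : fsf R J -> fsf R J).
Hypothesis Delta_lin : fsf_linear Delta.
Hypothesis Delta_e : forall i : J,
  Delta (fsf_e R i) (sigma i) = - Delta (fsf_e R (sigma i)) (sigma i) /\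
  (forall k : J, k != i -> k != sigma i -> Delta (fsf_e R i) k = 0).

Definition shift_difference (f : fsf R J) :=
  forall k, Delta f k = Delta (fsf_e R k) k * (f k - fsf_tilde sigma f k).

Lemma Delta_e_fixed (i : J) : sigma i = i -> Delta (fsf_e R i) i = 0.
Proof.
move=> sii; have := (Delta_e i).1; rewrite sii => /eqP.
by rewrite eq_sym eqNr => /eqP.
Qed.

Lemma shift_difference_e (i : J) : shift_difference (fsf_e R i).
Proof.
move=> k; rewrite fsf_tilde_e /=.
have [->|ki] := eqVneq k i.
  have [sii|_] := eqVneq i (sigma i); last by rewrite subr0 mulr1.
  by rewrite (Delta_e_fixed (esym sii)) mul0r.
have [->|ksi] := eqVneq k (sigma i); first by rewrite sub0r mulrN1 (Delta_e i).1.
by rewrite subrr mulr0 (Delta_e i).2.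
Qed.

Lemma shift_differenceP (f : fsf R J) : shift_difference f.
Proof.
elim/fsf_ind: f => [f f0 k|c x f IH k].
  by rewrite (fsf_linear0 Delta_lin f0) /= !f0 subrr mulr0.
rewrite Delta_lin.1 Delta_lin.2 /= IH shift_difference_e /=; ring.
Qed.

Lemma shift_difference_derivation : sigma_derivation sigma Delta.
Proof.
move=> f g; apply: fsf_ext => k.
rewrite /= (shift_differenceP (fsf_mul f g)) (shift_differenceP f).
by rewrite (shift_differenceP g) /=; ring.
Qed.

End ShiftDifference.

Unset Implicit Arguments.

Theorem theorem6 (R : realType) (J : countType) (sigma : bij J)
    (Delta : fsf R J -> fsf R J) (Hlin : fsf_linear Delta) :
  sigma_derivation sigma Delta <->
  (forall i : J,
     Delta (fsf_e R i) (sigma i) = - Delta (fsf_e R (sigma i)) (sigma i) /\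
     (forall k : J, k != i -> k != sigma i -> Delta (fsf_e R i) k = 0)).
Proof.
split=> [Delta_der i|]; last exact: (shift_difference_derivation Hlin).
split=> [|k ki ksi]; last exact: (derivation_e_out Delta_der ki ksi).
have [sii|sii] := eqVneq (sigma i) i; last exact: (derivation_e_swap Hlin Delta_der sii).
by rewrite sii (derivation_e_fixed Delta_der sii) oppr0.
Qed.
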